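(* Let $I=(T,((U_1,S_1),\dots,(U_k,S_k)))$ be an instance of \textsc{Generalized Graphic Inverse Voronoi in Trees} with $S_i\subseteq W_i$ for all $i$, let $xy\in E_1$ with $x\in W_1$ and $y\in U_1\setminus W_1$, and let $0<\varepsilon<\mathrm{res}(I)$. Let $I'$ be the instance obtained from $I$ by expanding the edge $xy$ from $E_1$ by $\varepsilon$. Suppose the answer to $I$ is ``yes''. If $\Sigma'$ is a solution to $I'$, then $\Sigma'$ is also a solution to $I$.
   Context: \textsc{Generalized Graphic Inverse Voronoi in Trees}: input is a tree $T$ with positive edge-lengths $\lambda$ and pairs $(U_1,S_1),\dots,(U_k,S_k)$ of subsets of $V(T)$ with $U_1,\dots,U_k$ covering $V(T)$. A solution is $s_1,\dots,s_k\in V(T)$ with $s_i\in S_i$ and $U_i=\mathrm{cell}_T(s_i,\{s_1,\dots,s_k\})$ for all $i$, where $\mathrm{cell}_T(s,\Sigma)=\{x\in V(T)\mid d_T(s,x)\le d_T(s',x)\ \forall s'\in\Sigma\}$ and $d_T$ is the shortest-path distance. For $i\in[k]$, $W_i=U_i\setminus\bigcup_{j\neq i}U_j$ and $E_i=\{uv\in E(T)\mid u\in W_i,\ v\in U_i\setminus W_i\}$. The resolution is $\mathrm{res}(I)=\min\bigl(\mathbb{R}_{>0}\cap\{d_T(s_i,u)-d_T(s_j,u)\mid u\in U_i\cap U_j,\ s_i\in S_i,\ s_j\in S_j,\ i,j\in[k]\}\bigr)$, with $\min\emptyset=+\infty$. Expansion of $xy\in E_1$ by $\varepsilon$: $T'$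 is obtained from $T$ by subdividing $xy$ with a new vertex $y'$, with $\lambda'(xy')=\lambda(xy)$, $\lambda'(yy')=\varepsilon$, other edges unchanged; $U_1'$ is the set of vertices of $U_1$ in the component of $T-y$ containing $x$, together with $y'$; $I'=(T',((U_1',S_1),(U_2,S_2),\dots,(U_k,S_k)))$. *)

From HB Require Import structures.
From mathcomp Require Import all_boot all_order all_algebra.
From mathcomp Require Import boolp classical_sets reals constructive_ereal.
Set Implicit Arguments. Unset Strict Implicit. Unset Printing Implicit Defensive.
Import Order.TTheory GRing.Theory Num.Theory.
Local Open Scope ring_scope.

Section Graph.
Variables (R : realType) (V : finType).

(* A graph is a relation e on the finite vertex type V; edge lengths are
   given by w : V -> V -> R (only relevant on edges). *)

Definition walk_weight (w : V -> V -> R) (u : V) (p : seq V) : R :=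
  \sum_(ab <- zip (u :: p) p) w ab.1 ab.2.

Definition is_walk (e : rel V) (u : V) (p : seq V) (v : V) : bool :=
  path e u p && (last u p == v).

Definition dist (e : rel V) (w : V -> V -> R) (u v : V) : R :=
  inf (fun r : R => exists p, is_walk e u p v /\ r = walk_weight w u p).

Definition connected_graph (e : rel V) : Prop :=
  forall u v, exists p, is_walk e u p v.

Definition acyclic (e : rel V) : Prop :=
  forall u p, path e u p -> last u p = u -> uniq p -> (size p < 3)%N.

Definition is_tree (e : rel V) : Prop :=
  symmetric e /\ irreflexive e /\ connected_graph e /\ acyclic e.

Definition edge_lengths (e : rel V) (w : V -> V -> R) : Prop :=
  forall u v, e u v -> 0 < w u v /\ w u v = w v u.

Definition cell (e : rel V) (w : V -> V -> R) (s : V) (Sig : {set V}) : {set V} :=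
  [set z | [forall t in Sig, dist e w s z <= dist e w t z]].

Definition is_solution (e : rel V) (w : V -> V -> R) (n : nat)
    (U S : 'I_n -> {set V}) (s : 'I_n -> V) : Prop :=
  forall i, s i \in S i /\ U i = cell e w (s i) [set s j | j : 'I_n].

Definition Wset (n : nat) (U : 'I_n -> {set V}) (i : 'I_n) : {set V} :=
  U i :\: \bigcup_(j | j != i) U j.

(* res(I), with min of the empty set = +oo *)
Definition res (e : rel V) (w : V -> V -> R) (n : nat)
    (U S : 'I_n -> {set V}) : \bar R :=
  \big[Order.min/+oo%E]_(i < n) \big[Order.min/+oo%E]_(j < n)
   \big[Order.min/+oo%E]_(u in U i :&: U j) \big[Order.min/+oo%E]_(si in S i)
   \big[Order.min/+oo%E]_(sj in S j | 0 < dist e w si u - dist e w sj u)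
     ((dist e w si u - dist e w sj u)%:E).

(* ---- expansion of the edge xy by eps: new vertex y' is None ---- *)
Definition exp_rel (e : rel V) (x y : V) : rel (option V) := fun a b =>
  match a, b with
  | Some a, Some b => e a b && ~~ (((a == x) && (b == y)) || ((a == y) && (b == x)))
  | Some a, None => (a == x) || (a == y)
  | None, Some b => (b == x) || (b == y)
  | None, None => false
  end.

Definition exp_len (w : V -> V -> R) (x y : V) (eps : R) :
    option V -> option V -> R := fun a b =>
  match a, b with
  | Some a, Some b => w a b
  | Some a, None => if a == x then w x y else if a == y then eps else 0
  | None, Some b => if b == x then w x y else if b == y then eps else 0
  | None, None => 0
  end.

Definition comp_avoid (e : rel V) (y x : V) : {set V} :=
  [set v | connect (fun a b => e a b && (a != y) && (b != y)) x v].

(* the sets of I' (index ord0 plays the role of index 1) *)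
Definition exp_U (e : rel V) (n : nat) (U : 'I_n.+1 -> {set V}) (x y : V)
    (i : 'I_n.+1) : {set option V} :=
  if i == ord0 then (Some @: (U i :&: comp_avoid e y x)) :|: [set None]
  else Some @: U i.

Definition exp_S (n : nat) (S : 'I_n -> {set V}) (i : 'I_n) : {set option V} :=
  Some @: S i.

End Graph.

From HB Require Import structures.
From mathcomp Require Import all_boot all_order all_algebra.
From mathcomp Require Import boolp classical_sets reals constructive_ereal.
From mathcomp Require Import lra.
Import Order.TTheory GRing.Theory Num.Theory.
Local Open Scope ring_scope.
Set Implicit Arguments. Unset Strict Implicit. Unset Printing Implicit Defensive.

(* Write [A] for the side of [x] in [T - xy].  In the expanded tree [T'] a
   vertex keeps its [T]-distances to the vertices on its own side of [xy],
   pays [eps] more to cross it, and sees the new vertex [y'] at distance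
   [d(., y)] from [A] and [d(., y) + eps] from the other side.  The site
   [s_1] lies in its own [T']-cell, hence in [A], and as [y'] lies in the cell
   of [s_1] only, [s_1] is strictly closest to [y']; comparing it with the
   site [s_m] of another cell containing [y], the bound
   [eps < res(I)] yields [d(s_1, y) = d(s_m, y) = min_j d(s_j, y)].  Hence on
   [A] the sites in [A] are strictly closer than the others, beyond [y] the
   site [s_m] is at least as close as the sites in [A], and in both cases the
   [T']-cells give the [T]-cells, since [T]- and [T']-distances agree between
   vertices on the same side.  It remains to decide whether a vertex [z]
   beyond [y] is in [U_1]: this holds iff [z] is in [U_m] and [y] lies on the
   geodesic from the site of [U_m] to [z].  By tree geometry the latter does
   not depend on whether that site is [s_m] or the site of [U_m] in a known
   solution of [I], because these two lie on the same side of [y]. *)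

Section Nearest.
Variables (R : realDomainType) (I : finType).
Implicit Types (F G : I -> R) (i j : I).

Definition nearest F i := forall j, F i <= F j.

Lemma nearest_exists F (i0 : I) : exists i, nearest F i.
Proof.
by case: (@arg_minP _ _ _ i0 xpredT F isT) => i _ Fi; exists i => j; apply: Fi.
Qed.

Lemma nearest_lt F i j : nearest F i -> ~ nearest F j -> F i < F j.
Proof.
move=> near_i near_j; rewrite ltNge; apply/negP => Fji.
by apply: near_j => l; apply: le_trans Fji (near_i l).
Qed.

Lemma nearest_perturb F G (P : pred I) j0 i :
  (forall j, F j <= G j) -> (forall j, P j -> G j = F j) -> P j0 ->
  (forall j, ~~ P j -> F j0 <= F j) -> (~~ P i -> F j0 < F i) ->
  nearest F i <-> nearest G i.
Proof.
move=> FG PGF P_j0 dom strict; have [P_i|nP_i] := boolP (P i).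
  rewrite /nearest (PGF i P_i); split=> near j; have [P_j|nP_j] := boolP (P j).
  - by rewrite PGF.
  - exact: le_trans (near j) (FG j).
  - by rewrite -(PGF j P_j).
  - by apply: le_trans (dom j nP_j); rewrite -(PGF j0 P_j0).
split=> near; have := near j0; rewrite leNgt.
  by rewrite strict.
by rewrite (PGF j0 P_j0) (lt_le_trans (strict nP_i) (FG i)).
Qed.

End Nearest.

Section Distances.
Variables (R : realType) (V : finType) (e : rel V) (w : V -> V -> R).
Hypotheses (e_sym : symmetric e) (w_len : edge_lengths e w) (e_conn : connected_graph e).
Local Notation d := (dist e w).

Definition potential (h : V -> R) := forall u v, e u v -> h v - h u <= w u v.

Lemma walk_weight_cons a b p : walk_weight w a (b :: p) = w a b + walk_weight w b p.
Proof. by rewrite /walk_weight /= big_cons. Qed.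

Lemma potential0 : potential (fun=> 0).
Proof. by move=> u v /w_len [/ltW + _]; rewrite subrr. Qed.

Lemma potential_walk h a p :
  potential h -> path e a p -> h (last a p) - h a <= walk_weight w a p.
Proof.
move=> hP; elim: p a => [|b p IH] a /=; first by rewrite subrr /walk_weight big_nil.
by case/andP=> eab pb; rewrite walk_weight_cons; have := IH b pb; have := hP _ _ eab; lra.
Qed.

Lemma potential_le_dist h a b : potential h -> h b - h a <= d a b.
Proof.
move=> hP; apply: lb_le_inf.
  by have [p walk_p] := e_conn a b; exists (walk_weight w a p), p.
by move=> _ [p [/andP [pp /eqP <-] ->]]; apply: potential_walk.
Qed.

Lemma dist_le_walk a p b : is_walk e a p b -> d a b <= walk_weight w a p.
Proof.
move=> walk_p; apply: ge_inf; last by exists p.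
exists 0 => _ [q [/andP [qp _] ->]].
by have := potential_walk potential0 qp; rewrite subrr.
Qed.

Lemma dist_ge0 a b : 0 <= d a b.
Proof. by have := potential_le_dist a b potential0; rewrite subrr. Qed.

Lemma dist_xx a : d a a = 0.
Proof.
apply/le_anti; rewrite dist_ge0 andbT.
by have := @dist_le_walk a [::] a; rewrite /walk_weight big_nil; apply; rewrite /is_walk /= eqxx.
Qed.

Lemma dist_le_edge u v : e u v -> d u v <= w u v.
Proof.
move=> euv; have := @dist_le_walk u [:: v] v.
by rewrite /walk_weight /= big_cons big_nil addr0; apply; rewrite /is_walk /= euv eqxx.
Qed.

Lemma dist_le_cons v u b : e v u -> d v b <= w v u + d u b.
Proof.
move=> evu; rewrite -lerBlDl; apply: lb_le_inf.
  by have [p walk_p] := e_conn u b; exists (walk_weight w u p), p.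
move=> _ [p [/andP [pp /eqP lp] ->]]; rewrite lerBlDl -walk_weight_cons.
by apply: dist_le_walk; rewrite /is_walk /= evu pp lp eqxx.
Qed.

Lemma dist_triangle a c b : d a b <= d a c + d c b.
Proof.
have hP : potential (fun t => - d t b).
  by move=> u v euv; have := dist_le_cons b euv; lra.
by have := potential_le_dist a c hP; lra.
Qed.

Lemma dist_potential a : potential (d a).
Proof. by move=> u v euv; have := dist_triangle a u v; have := dist_le_edge euv; lra. Qed.

Lemma dist_sym a b : d a b = d b a.
Proof.
suff le_sym u v : d u v <= d v u by apply/le_anti; rewrite !le_sym.
have hP : potential (fun t => d t v).
  move=> t t' ett'; have [_ w_sym] := w_len ett'.
  by have := dist_le_cons v (_ : e t' t); rewrite -e_sym w_sym; move/(_ ett'); lra.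
by have := potential_le_dist v u hP; rewrite dist_xx subr0.
Qed.

Lemma potential_glue (C : {set V}) u v h1 h2 :
  (forall a b, e a b -> a \in C -> b \notin C -> a = u /\ b = v) ->
  (forall a b, e a b -> a \in C -> b \in C -> h1 b - h1 a <= w a b) ->
  (forall a b, e a b -> a \notin C -> b \notin C -> h2 b - h2 a <= w a b) ->
  h2 v - h1 u <= w u v -> h1 u - h2 v <= w u v ->
  potential (fun t => if t \in C then h1 t else h2 t).
Proof.
move=> cross in1 in2 huv hvu a b eab.
case: ifP => bC; case: ifP => aC.
- exact: in1.
- have eba : e b a by rewrite e_sym.
  have [_ <-] := w_len eba.
  by have [-> ->] := cross b a eba bC (negbT aC).
- by have [-> ->] := cross a b eab aC (negbT bC).
- by apply: in2; rewrite ?aC ?bC.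
Qed.

Lemma cellP n (f : 'I_n -> V) i t :
  reflect (nearest (fun j => d (f j) t) i) (t \in cell e w (f i) [set f j | j : 'I_n]).
Proof.
rewrite inE; apply: (iffP forallP) => [near j | near a].
  by have /implyP := near (f j); apply; apply: imset_f.
by apply/implyP => /imsetP [j _ ->].
Qed.

End Distances.

Section Tree.
Variables (R : realType) (V : finType) (e : rel V) (w : V -> V -> R).
Hypotheses (e_tree : is_tree e) (w_len : edge_lengths e w).
Let e_sym : symmetric e := proj1 e_tree.
Let e_irr : irreflexive e := proj1 (proj2 e_tree).
Let e_conn : connected_graph e := proj1 (proj2 (proj2 e_tree)).
Let e_acyc : acyclic e := proj2 (proj2 (proj2 e_tree)).
Local Notation d := (dist e w).
Let dsym := dist_sym e_sym w_len e_conn.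
Let dtri := dist_triangle w_len e_conn.
Let dxx := dist_xx w_len e_conn.
Local Notation avoid v := (fun a b => e a b && (a != v) && (b != v)).

Lemma edge_neq u v : e u v -> u != v.
Proof. by apply: contraTneq => ->; rewrite e_irr. Qed.

Lemma avoid_notin v u p : path (avoid v) u p -> v \notin p.
Proof.
elim: p u => [|b p IH] u //= /andP [/andP [_ bv] /IH vp].
by rewrite inE negb_or eq_sym bv vp.
Qed.

Lemma comp_avoid_self v u : u \in comp_avoid e v u.
Proof. by rewrite inE connect0. Qed.

Lemma comp_avoid_neq v u t : u != v -> t \in comp_avoid e v u -> t != v.
Proof.
rewrite inE => uv /connectP [p /avoid_notin vp ->].
by apply: contraTneq (mem_last u p) => ->; rewrite inE negb_or eq_sym uv vp.
Qed.

Lemma notin_comp_avoid u v : e u v -> v \notin comp_avoid e v u.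
Proof. by move=> euv; apply/negP => /(comp_avoid_neq (edge_neq euv)); rewrite eqxx. Qed.

(* The only edge leaving the component of [u] in [T - v] is [uv]: any other
   one ends at [v], and a simple path from [u] to [a] avoiding [v], closed up
   through [v], would be a cycle. *)
Lemma comp_avoid_edge u v a b : e u v -> a \in comp_avoid e v u -> e a b ->
  b \notin comp_avoid e v u -> a = u /\ b = v.
Proof.
move=> euv aC eab bC; have av := comp_avoid_neq (edge_neq euv) aC.
have bv : b = v.
  apply/eqP; apply: contraNT bC => bv; move: aC; rewrite !inE => /connect_trans; apply.
  by apply: connect1; rewrite /= eab av bv.
split=> //; subst b; move: aC; rewrite inE => /connectP [p pp ap]; subst a.
case: (shortenP pp) eab => q qp uq _ eqv.
have pe : path e u q by apply: sub_path qp => s t /andP [/andP []].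
have := @e_acyc v (u :: rcons q v).
rewrite /= rcons_path pe eqv e_sym euv last_rcons mem_rcons inE negb_or (edge_neq euv).
move: uq; rewrite /= rcons_uniq (avoid_notin qp) => /andP [-> ->].
by move=> /(_ isT erefl isT); rewrite size_rcons; case: q {qp pe eqv pp}.
Qed.

Lemma comp_avoid_cover v t : t != v -> exists2 u, e u v & t \in comp_avoid e v u.
Proof.
move=> tv; have avoid_sym : symmetric (avoid v) by move=> a b /=; rewrite e_sym andbAC.
suff [u euv tu] : exists2 u, e u v & connect (avoid v) t u.
  by exists u; rewrite // inE (sym_connect_sym avoid_sym).
have [p /andP [pp /eqP pv]] := e_conn t v.
elim: p t tv pp pv => [|b p IH] a av /=; first by move=> _ av'; rewrite av' eqxx in av.
case/andP=> eab pb pv; have [bv|bv] := eqVneq b v.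
  by exists a; [rewrite -bv | apply: connect0].
have [u euv bu] := IH b bv pb pv; exists u => //.
by apply: connect_trans bu; apply: connect1; rewrite /= eab av bv.
Qed.

Lemma dist_cut u v a b : e u v -> a \in comp_avoid e v u -> b \notin comp_avoid e v u ->
  d a u + w u v + d v b <= d a b.
Proof.
move=> euv aC bC.
have hP : potential e w (fun t => if t \in comp_avoid e v u then d a t
                                  else d a u + w u v + d v t).
  apply: (potential_glue e_sym w_len (u := u) (v := v)).
  - by move=> t t' ett' tC t'C; apply: comp_avoid_edge euv tC ett' t'C.
  - by move=> ? ? ? _ _; apply: dist_potential.
  - by move=> t t' ett' _ _; have := dist_potential w_len e_conn v ett'; lra.
  - by rewrite dxx; lra.
  - by have [w_gt0 _] := w_len euv; rewrite dxx; lra.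
by have := potential_le_dist e_conn a b hP; rewrite aC (negbTE bC) dxx; lra.
Qed.

Definition between a v b := d a b == d a v + d v b.

Lemma between_sym a v b : between a v b = between b v a.
Proof.
by rewrite /between (dsym b a) (dsym b v) (dsym v a) [d a v + _]addrC.
Qed.

Lemma ltNbetween a v b : (d a b < d a v + d v b) = ~~ between a v b.
Proof. by rewrite lt_def dtri andbT eq_sym. Qed.

Lemma between_cut u v a b : e u v -> a \in comp_avoid e v u ->
  b \notin comp_avoid e v u -> between a v b.
Proof.
move=> euv aC bC; rewrite /between eq_le dtri /=.
by have := dist_cut euv aC bC; have := dtri a u v;
  have := dist_le_edge w_len euv; lra.
Qed.

Lemma nbetween_comp u v a b : e u v -> a \in comp_avoid e v u ->
  b \in comp_avoid e v u -> ~~ between a v b.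
Proof.
move=> euv aC bC; rewrite -ltNbetween (dsym v b); have vC := notin_comp_avoid euv.
have := dist_cut euv aC vC; have := dist_cut euv bC vC; rewrite !dxx.
have := dtri a u b; rewrite (dsym u b).
by have [] := w_len euv; lra.
Qed.

(* In a tree, "[v] is not between" is transitive: it means lying in the same
   component of [T - v]. *)
Lemma nbetween_trans a b z v :
  ~~ between a v b -> ~~ between a v z -> ~~ between b v z.
Proof.
move=> nab naz.
have zv : z != v by apply: contraNneq naz => ->; rewrite /between dxx addr0.
have [u euv zC] := comp_avoid_cover zv.
have aC : a \in comp_avoid e v u.
  by apply: contraNT naz => aC; rewrite between_sym; apply: between_cut euv zC aC.
have bC : b \in comp_avoid e v u.
  by apply: contraNT nab => bC; apply: between_cut euv aC bC.
exact: nbetween_comp euv bC zC.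
Qed.

End Tree.

Lemma mem_exp_U_Some (V : finType) (e : rel V) n (U : 'I_n.+1 -> {set V}) x y i t :
  (Some t \in exp_U e U x y i) = (t \in U i) && ((i == ord0) ==> (t \in comp_avoid e y x)).
Proof.
rewrite /exp_U; case: (i == ord0) => /=; last by rewrite andbT (mem_imset _ _ Some_inj).
by rewrite finset.in_setU finset.in_set1 orbF (mem_imset _ _ Some_inj) finset.in_setI.
Qed.

Lemma mem_exp_U_None (V : finType) (e : rel V) n (U : 'I_n.+1 -> {set V}) x y i :
  (None \in exp_U e U x y i) = (i == ord0).
Proof.
rewrite /exp_U; case: (i == ord0); first by rewrite finset.in_setU finset.in_set1 eqxx orbT.
by apply/imsetP => [[]].
Qed.

Section Expansion.
Variables (R : realType) (V : finType) (e : rel V) (w : V -> V -> R) (x y : V) (eps : R).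
Hypotheses (e_tree : is_tree e) (w_len : edge_lengths e w) (exy : e x y) (eps_gt0 : 0 < eps).
Let e_sym : symmetric e := proj1 e_tree.
Let e_conn : connected_graph e := proj1 (proj2 (proj2 e_tree)).
Local Notation e' := (exp_rel e x y).
Local Notation w' := (exp_len w x y eps).
Local Notation d := (dist e w).
Local Notation d' := (dist e' w').
Local Notation A := (comp_avoid e y x).
Let dsym := dist_sym e_sym w_len e_conn.
Let dxx := dist_xx w_len e_conn.
Let xA : x \in A := comp_avoid_self e y x.
Let yA : y \notin A := notin_comp_avoid e_tree exy.
Let yx : (y == x) = false := negbTE (edge_neq e_tree (etrans (e_sym y x) exy)).

Lemma exp_rel_sym : symmetric e'.
Proof.
case=> [a|] [b|] //=; rewrite e_sym.
by case: (a == x); case: (a == y); case: (b == x); case: (b == y).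
Qed.

Lemma exp_edge_lengths : edge_lengths e' w'.
Proof.
case=> [a|] [b|] //=; first by case/andP => /w_len.
- by case: (eqVneq a x) => [_ _|_ /= ->] //=; split=> //; case: (w_len exy).
- by case: (eqVneq b x) => [_ _|_ /= ->] //=; split=> //; case: (w_len exy).
Qed.

Lemma exp_connect_Some a b : e a b -> connect e' (Some a) (Some b).
Proof.
move=> eab; case E : (e' (Some a) (Some b)); first exact: connect1.
move: E => /= /negbT; rewrite eab /= negbK => /orP [] /andP [/eqP -> /eqP ->];
  by apply: (@connect_trans _ _ None); apply: connect1; rewrite /= eqxx ?orbT.
Qed.

Lemma exp_connected : connected_graph e'.
Proof.
have along a p : path e a p -> connect e' (Some a) (Some (last a p)).
  elim: p a => [|b p IH] a /=; first by rewrite connect0.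
  by case/andP => eab /IH; apply: connect_trans (exp_connect_Some eab).
have from_new t : connect e' None t.
  case: t => [t|]; last exact: connect0.
  have [p /andP [pp /eqP <-]] := e_conn x t.
  by apply: connect_trans (along _ _ pp); apply: connect1; rewrite /= eqxx.
move=> a b; have : connect e' a b.
  by apply: connect_trans (from_new b); rewrite (sym_connect_sym exp_rel_sym).
by case/connectP => p pp ->; exists p; rewrite /is_walk pp eqxx.
Qed.

Lemma exp_relE a b : e' (Some a) (Some b) = e a b && ((a \in A) == (b \in A)).
Proof.
rewrite /=; case eab : (e a b) => //=.
have [aA|aA] := boolP (a \in A); have [bA|bA] := boolP (b \in A) => /=.
- by apply/negP => /orP [] /andP [/eqP ea /eqP eb]; move: aA bA; rewrite ea eb (negbTE yA).
- by have [-> ->] := comp_avoid_edge e_tree exy aA eab bA; rewrite !eqxx.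
- have eba : e b a by rewrite e_sym.
  by have [-> ->] := comp_avoid_edge e_tree exy bA eba aA; rewrite !eqxx orbT.
- by apply/negP => /orP [] /andP [/eqP ea /eqP eb]; move: aA bA; rewrite ea eb xA.
Qed.

Let w'_len := exp_edge_lengths.
Let e'_conn := exp_connected.
Let d'sym := dist_sym exp_rel_sym w'_len e'_conn.
Let d'tri := dist_triangle w'_len e'_conn.

(* The new vertex [y'] is counted on the side of [x]. *)
Definition exp_side (t : option V) : bool := if t is Some a then a \in A else true.

Lemma exp_dist_potential a : potential e' w'
  (fun t => d a (odflt y t) + (if (a \in A) == exp_side t then 0 else eps)).
Proof.
have pen_le s1 s2 :
    (if (a \in A) == s1 then 0 else eps) - (if (a \in A) == s2 then 0 else eps) <= eps.
  by have := eps_gt0; case: (a \in A); case: s1; case: s2 => /=; lra.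
have dpot := dist_potential w_len e_conn a.
have eyx : e y x by rewrite e_sym.
have [_ w_sym] := w_len exy.
case=> [t1|] [t2|] //.
- by rewrite exp_relE => /andP [e12 /eqP /= ->]; have := dpot _ _ e12; lra.
- move=> /= /orP [] /eqP ->; rewrite ?xA ?(negbTE yA) eqxx ?yx.
    by have := dpot _ _ exy; lra.
  by rewrite [d a y + _]addrC addrKA pen_le.
- move=> /= /orP [] /eqP ->; rewrite ?xA ?(negbTE yA) eqxx ?yx.
    by have := dpot _ _ eyx; rewrite w_sym; lra.
  by rewrite [d a y + _]addrC addrKA pen_le.
Qed.

Lemma exp_dist_potential_same a t1 t2 : e t1 t2 -> (t1 \in A) = (t2 \in A) ->
  d' (Some a) (Some t2) - d' (Some a) (Some t1) <= w t1 t2.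
Proof.
by move=> e12 s12; apply: (dist_potential w'_len e'_conn); rewrite exp_relE e12 s12 eqxx.
Qed.

Lemma dist_exp_same a b : (a \in A) = (b \in A) -> d' (Some a) (Some b) <= d a b.
Proof.
move=> ab; have const_pot (c : R) t1 t2 : e t1 t2 -> c - c <= w t1 t2.
  by move=> /w_len [/ltW]; rewrite subrr.
have w_xy_ge0 : 0 <= w x y by case: (w_len exy) => /ltW.
have [aA|aA] := boolP (a \in A); move: (aA); rewrite ab => bA.
  have hP : potential e w (fun t => if t \in A then d' (Some a) (Some t)
                                    else d' (Some a) (Some x)).
    apply: (potential_glue e_sym w_len (u := x) (v := y)).
    - by move=> t t' ett' tA t'A; apply: comp_avoid_edge exy tA ett' t'A.
    - by move=> t t' ett' tA t'A; apply: exp_dist_potential_same; rewrite ?tA ?t'A.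
    - by move=> t t' ett' _ _; apply: const_pot.
    - by rewrite subrr.
    - by rewrite subrr.
  have := potential_le_dist e_conn a b hP.
  by rewrite aA bA (dist_xx w'_len e'_conn); lra.
have hP : potential e w (fun t => if t \in A then d' (Some a) (Some y)
                                  else d' (Some a) (Some t)).
  apply: (potential_glue e_sym w_len (u := x) (v := y)).
  - by move=> t t' ett' tA t'A; apply: comp_avoid_edge exy tA ett' t'A.
  - by move=> t t' ett' _ _; apply: const_pot.
  - move=> t t' ett' tA t'A; apply: exp_dist_potential_same => //.
    by rewrite (negbTE tA) (negbTE t'A).
  - by rewrite subrr.
  - by rewrite subrr.
have := potential_le_dist e_conn a b hP.
by rewrite (negbTE aA) (negbTE bA) (dist_xx w'_len e'_conn); lra.
Qed.

Lemma dist_x_new : d' (Some x) None <= w x y.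
Proof. by have := @dist_le_edge _ _ _ _ w'_len (Some x) None; rewrite /= eqxx; apply. Qed.

Lemma dist_new_y : d' None (Some y) <= eps.
Proof. by have := @dist_le_edge _ _ _ _ w'_len None (Some y); rewrite /= yx eqxx orbT; apply. Qed.

Lemma dist_exp_cross a b : a \in A -> b \notin A -> d' (Some a) (Some b) <= d a b + eps.
Proof.
move=> aA bA; have := dist_cut e_tree w_len exy aA bA.
have : d' (Some a) (Some x) <= d a x by apply: dist_exp_same; rewrite aA xA.
have : d' (Some y) (Some b) <= d y b by apply: dist_exp_same; rewrite (negbTE bA) (negbTE yA).
have := d'tri (Some a) (Some x) (Some b); have := d'tri (Some x) None (Some b).
have := d'tri None (Some y) (Some b); have := dist_x_new; have := dist_new_y.
lra.
Qed.

Lemma dist_exp_new a : d' (Some a) None <= d a y + (if a \in A then 0 else eps).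
Proof.
have [aA|aA] := boolP (a \in A).
  have := dist_cut e_tree w_len exy aA yA; rewrite dxx.
  have : d' (Some a) (Some x) <= d a x by apply: dist_exp_same; rewrite aA xA.
  by have := d'tri (Some a) (Some x) None; have := dist_x_new; lra.
have : d' (Some a) (Some y) <= d a y by apply: dist_exp_same; rewrite (negbTE aA) (negbTE yA).
by have := d'tri (Some a) (Some y) None; have := dist_new_y; rewrite d'sym; lra.
Qed.

Lemma dist_exp a t :
  d' (Some a) t = d a (odflt y t) + (if (a \in A) == exp_side t then 0 else eps).
Proof.
apply/le_anti/andP; split; last first.
  have := potential_le_dist e'_conn (Some a) t (exp_dist_potential a).
  by rewrite /= eqxx dxx; lra.
case: t => [b|] /=; last by rewrite eqb_id; apply: dist_exp_new.
have [aA|aA] := boolP (a \in A); have [bA|bA] := boolP (b \in A) => /=; rewrite ?addr0.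
- by apply: dist_exp_same; rewrite aA bA.
- exact: dist_exp_cross.
- by rewrite d'sym dsym; apply: dist_exp_cross.
- by apply: dist_exp_same; rewrite (negbTE aA) (negbTE bA).
Qed.

Lemma dist_le_exp a b : d a b <= d' (Some a) (Some b).
Proof. by rewrite dist_exp; case: ifP => _; have := eps_gt0; lra. Qed.

End Expansion.

Lemma Wset_notin (T : finType) n (U : 'I_n -> {set T}) i j t :
  t \in Wset U i -> j != i -> t \notin U j.
Proof. by case/setDP => _ tn ji; apply: contra tn => tj; apply/bigcupP; exists j. Qed.

Lemma not_Wset (T : finType) n (U : 'I_n -> {set T}) i t :
  t \in U i -> t \notin Wset U i -> exists2 j, j != i & t \in U j.
Proof.
move=> tU; rewrite /Wset finset.in_setD tU andbT negbK => /bigcupP [j ji tj].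
by exists j.
Qed.

Lemma dist_le_of_lt_res (R : realType) (V : finType) (e : rel V) (w : V -> V -> R) n
    (U S : 'I_n -> {set V}) eps i j u a b :
  (eps%:E < res e w U S)%E -> u \in U i -> u \in U j -> a \in S i -> b \in S j ->
  dist e w a u <= dist e w b u + eps -> dist e w a u <= dist e w b u.
Proof.
move=> eps_res ui uj ai bj le_eps; rewrite leNgt; apply/negP => lt_ba.
have : (res e w U S <= (dist e w a u - dist e w b u)%:E)%E.
  apply: (bigmin_inf i) => //; apply: (bigmin_inf j) => //.
  apply: (bigmin_inf u); first by rewrite finset.in_setI ui uj.
  apply: (bigmin_inf a) => //; apply: (bigmin_inf b) => //.
  by rewrite bj subr_gt0 lt_ba.
by move/(lt_le_trans eps_res); rewrite lte_fin; lra.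
Qed.

Section Solution.
Variables (R : realType) (V : finType) (e : rel V) (w : V -> V -> R) (k : nat)
  (U S : 'I_k.+1 -> {set V}) (x y : V) (eps : R) (sg s : 'I_k.+1 -> V).
Hypotheses (e_tree : is_tree e) (w_len : edge_lengths e w) (exy : e x y)
  (eps_gt0 : 0 < eps) (S_sub_W : forall i, S i \subset Wset U i)
  (eps_res : (eps%:E < res e w U S)%E) (sg_sol : is_solution e w U S sg)
  (s_sol : is_solution (exp_rel e x y) (exp_len w x y eps) (exp_U e U x y) (exp_S S)
             (fun i => Some (s i))).
Let e_sym : symmetric e := proj1 e_tree.
Let e_conn : connected_graph e := proj1 (proj2 (proj2 e_tree)).
Local Notation d := (dist e w).
Local Notation d' := (dist (exp_rel e x y) (exp_len w x y eps)).
Local Notation A := (comp_avoid e y x).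
Local Notation U' := (exp_U e U x y).
Let dsym := dist_sym e_sym w_len e_conn.
Let dtri := dist_triangle w_len e_conn.
Let d'E := dist_exp e_tree w_len exy eps_gt0.
Let le_d' := dist_le_exp e_tree w_len exy eps_gt0.
Let w'_len := exp_edge_lengths w_len exy eps_gt0.
Let e'_conn := exp_connected x y e_tree.
Let yA : y \notin A := notin_comp_avoid e_tree exy.
Let dist_via_y a b (aA : a \in A) (bA : b \notin A) : d a b = d a y + d y b :=
  eqP (between_cut e_tree w_len exy aA bA).

Lemma s_in_S i : s i \in S i.
Proof. by have := (s_sol i).1; rewrite /exp_S (mem_imset _ _ Some_inj). Qed.

Lemma mem_U i z : reflect (nearest (fun j => d (sg j) z) i) (z \in U i).
Proof. by rewrite (sg_sol i).2; apply: cellP. Qed.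

Lemma mem_U' i t : reflect (nearest (fun j => d' (Some (s j)) t) i) (t \in U' i).
Proof. by rewrite (s_sol i).2; apply: cellP. Qed.

Lemma s0_in_A : s ord0 \in A.
Proof.
have : Some (s ord0) \in U' ord0.
  by apply/mem_U' => j; rewrite (dist_xx w'_len e'_conn) (dist_ge0 w'_len e'_conn).
by rewrite mem_exp_U_Some eqxx /= => /andP [].
Qed.

Lemma W0_sub_A t : t \in Wset U ord0 -> t \in A.
Proof.
move=> tW; have [i /mem_U'] := nearest_exists (fun j => d' (Some (s j)) (Some t)) ord0.
rewrite mem_exp_U_Some => /andP [tU]; have [_ //|i0] := eqVneq i ord0.
by have := Wset_notin tW i0; rewrite tU.
Qed.

Lemma sg0_in_A : sg ord0 \in A.
Proof. by apply: W0_sub_A; apply: (fintype.subsetP (S_sub_W ord0)); apply: (sg_sol ord0).1. Qed.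

(* [y'] lies in the cell of [s ord0] only. *)
Lemma dist_s0_y_lt j : j != ord0 ->
  d (s ord0) y < d (s j) y + (if s j \in A then 0 else eps).
Proof.
move=> j0; have := @nearest_lt _ _ (fun j => d' (Some (s j)) None) ord0 j.
rewrite !d'E /= !eqb_id s0_in_A addr0; apply.
  by apply/mem_U'; rewrite mem_exp_U_None.
by move/mem_U'; rewrite mem_exp_U_None (negbTE j0).
Qed.

Section SecondCellOfY.
Variable m : 'I_k.+1.
Hypotheses (m_neq0 : m != ord0) (y_in_U0 : y \in U ord0) (y_in_Um : y \in U m).

Lemma nearest_y_sm : nearest (fun j => d' (Some (s j)) (Some y)) m.
Proof. by apply/mem_U'; rewrite mem_exp_U_Some y_in_Um (negbTE m_neq0). Qed.

Lemma sm_notin_A : s m \notin A.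
Proof.
apply/negP => smA; have := nearest_y_sm ord0; have := dist_s0_y_lt m_neq0.
by rewrite !d'E /= smA s0_in_A (negbTE yA) /=; lra.
Qed.

Lemma s_eq_dist_y : d (s ord0) y = d (s m) y.
Proof.
have := nearest_y_sm ord0; have := dist_s0_y_lt m_neq0.
rewrite !d'E /= (negbTE sm_notin_A) s0_in_A (negbTE yA) /= addr0 => lt0m lem0.
apply/le_anti/andP; split.
  by apply: (dist_le_of_lt_res eps_res y_in_U0 y_in_Um (s_in_S ord0) (s_in_S m)); lra.
by apply: (dist_le_of_lt_res eps_res y_in_Um y_in_U0 (s_in_S m) (s_in_S ord0)); lra.
Qed.

Lemma s0_nearest_y : nearest (fun j => d (s j) y) ord0.
Proof.
move=> j; have [jA|jA] := boolP (s j \in A).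
  have [-> //|j0] := eqVneq j ord0.
  by have := dist_s0_y_lt j0; rewrite jA addr0 => /ltW.
have := nearest_y_sm j; rewrite !d'E /= (negbTE sm_notin_A) (negbTE jA) (negbTE yA) /=.
by rewrite !addr0 s_eq_dist_y.
Qed.

Lemma sg_eq_dist_y : d (sg ord0) y = d (sg m) y.
Proof. by apply/le_anti/andP; split; [move/mem_U: y_in_U0 | move/mem_U: y_in_Um]. Qed.

Lemma nearest0_outside (t : 'I_k.+1 -> V) z :
  t ord0 \in A -> d (t ord0) y = d (t m) y -> z \notin A ->
  nearest (fun j => d (t j) z) ord0 <->
  nearest (fun j => d (t j) z) m /\ between e w (t m) y z.
Proof.
move=> t0A t0m zA; have t0z : d (t ord0) z = d (t m) y + d y z by rewrite -t0m dist_via_y.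
split=> [near0 | [nearm /eqP tmz] j].
  have tmz : d (t m) z = d (t ord0) z by apply/le_anti; rewrite near0 t0z dtri.
  by split; [move=> j; rewrite tmz; apply: near0 | rewrite /between tmz t0z].
by rewrite t0z -tmz; apply: nearm.
Qed.

Lemma nbetween_sgm_sm : ~~ between e w (sg m) y (s m).
Proof.
have smW : s m \in Wset U m by apply: (fintype.subsetP (S_sub_W m)); apply: s_in_S.
have smU0 : s m \notin U ord0 by apply: Wset_notin smW _; rewrite eq_sym.
apply: contra smU0 => btw; apply/mem_U.
apply/(nearest0_outside sg0_in_A sg_eq_dist_y sm_notin_A); split=> //.
by apply/mem_U; case/setDP: smW.
Qed.

Lemma between_sm_sgm z : between e w (s m) y z = between e w (sg m) y z.
Proof.
have nb : ~~ between e w (s m) y (sg m) by rewrite between_sym // nbetween_sgm_sm.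
by apply/idP/idP; apply: contraLR => nbz; [apply: nbetween_trans nbetween_sgm_sm nbz |
  apply: nbetween_trans nb nbz].
Qed.

Lemma s0_closer_inside j z : z \in A -> s j \notin A -> d (s ord0) z < d (s j) z.
Proof.
move=> zA jA; have := nbetween_comp e_tree w_len exy s0_in_A zA.
rewrite -ltNbetween // (dsym (s j) z) (dist_via_y zA jA) (dsym z y) (dsym y (s j)).
by have := s0_nearest_y j; lra.
Qed.

Lemma dist_sm_le z : d (s m) z <= d (s ord0) y + d y z.
Proof. by rewrite s_eq_dist_y dtri. Qed.

Lemma cell_inside i z : z \in A -> z \in U i <-> nearest (fun j => d (s j) z) i.
Proof.
move=> zA; have -> : (z \in U i) = (Some z \in U' i).
  by rewrite mem_exp_U_Some zA implybT andbT.
have near_eq : nearest (fun j => d (s j) z) i <->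
               nearest (fun j => d' (Some (s j)) (Some z)) i.
  apply: (nearest_perturb (P := fun j => s j \in A) (j0 := ord0)).
  - by move=> j; apply: le_d'.
  - by move=> j jA; rewrite d'E /= jA zA /= addr0.
  - exact: s0_in_A.
  - by move=> j /(s0_closer_inside zA) /ltW.
  - exact: s0_closer_inside zA.
by split=> [/mem_U'/near_eq | /near_eq/mem_U'].
Qed.

Lemma cell_outside i z : z \notin A -> i != ord0 ->
  z \in U i <-> nearest (fun j => d (s j) z) i.
Proof.
move=> zA i0; have -> : (z \in U i) = (Some z \in U' i).
  by rewrite mem_exp_U_Some (negbTE i0) andbT.
have near_eq : nearest (fun j => d (s j) z) i <->
               nearest (fun j => d' (Some (s j)) (Some z)) i.
  apply: (nearest_perturb (P := fun j => s j \notin A) (j0 := m)).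
  - by move=> j; apply: le_d'.
  - by move=> j jA; rewrite d'E /= (negbTE jA) (negbTE zA) /= addr0.
  - exact: sm_notin_A.
  - move=> j; rewrite negbK => jA; rewrite (dist_via_y jA zA).
    by have := dist_sm_le z; have := s0_nearest_y j; lra.
  - rewrite negbK => iA; rewrite (dist_via_y iA zA).
    by have := dist_sm_le z; have := dist_s0_y_lt i0; rewrite iA; lra.
by split=> [/mem_U'/near_eq | /near_eq/mem_U'].
Qed.

Lemma cell_outside0 z : z \notin A -> z \in U ord0 <-> nearest (fun j => d (s j) z) ord0.
Proof.
move=> zA; have s_tie := nearest0_outside s0_in_A s_eq_dist_y zA.
have sg_tie := nearest0_outside sg0_in_A sg_eq_dist_y zA.
split=> [/mem_U/sg_tie [/mem_U zUm btw] | /s_tie [/(cell_outside zA m_neq0) zUm btw]].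
  by apply/s_tie; split; [apply/(cell_outside zA m_neq0) | rewrite between_sm_sgm].
by apply/mem_U/sg_tie; split; [apply/mem_U | rewrite -between_sm_sgm].
Qed.

Lemma s_solution : is_solution e w U S s.
Proof.
move=> i; split; first exact: s_in_S.
apply/setP => z; suff key : z \in U i <-> nearest (fun j => d (s j) z) i.
  by apply/idP/cellP => /key.
have [zA|zA] := boolP (z \in A); first exact: cell_inside.
by have [->|i0] := eqVneq i ord0; [apply: cell_outside0 | apply: cell_outside].
Qed.

End SecondCellOfY.
End Solution.

Unset Implicit Arguments. Set Strict Implicit.

Theorem lemma17 (R : realType) (V : finType) (e : rel V) (w : V -> V -> R)
    (k : nat) (U S : 'I_k.+1 -> {set V}) (x y : V) (eps : R) :
  is_tree e -> edge_lengths e w ->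
  \bigcup_(i < k.+1) U i = [set: V] ->
  (forall i, S i \subset Wset U i) ->
  e x y -> x \in Wset U ord0 -> y \in U ord0 :\: Wset U ord0 ->
  0 < eps -> (eps%:E < res e w U S)%E ->
  (exists s, is_solution e w U S s) ->
  forall s' : 'I_k.+1 -> option V,
    is_solution (exp_rel e x y) (exp_len w x y eps) (exp_U e U x y) (exp_S S) s' ->
    exists s : 'I_k.+1 -> V,
      (forall i, s' i = Some (s i)) /\ is_solution e w U S s.
Proof.
move=> e_tree w_len _ S_sub_W exy _ /setDP [y_in_U0 y_notin_W0] eps_gt0 eps_res
  [sg sg_sol] s' s'_sol.
have [s s'E] : exists s, forall i, s' i = Some (s i).
  by exists (fun i => odflt x (s' i)) => i; case/imsetP: (s'_sol i).1 => v _ ->.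
rewrite (funext s'E) in s'_sol.
have [m m_neq0 y_in_Um] := not_Wset y_in_U0 y_notin_W0.
exists s; split=> //.
exact: (s_solution e_tree w_len exy eps_gt0 S_sub_W eps_res sg_sol s'_sol m_neq0 y_in_U0 y_in_Um).
Qed.
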